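(* For a right $R$-module $M$ the following are equivalent: (a) $M$ is endoregular; (b) $M$ is finite $\Sigma$-Rickart and $M\in\mathfrak{F}_M$; (c) $M^{(n)}$ satisfies the $D_2$ condition for every integer $n>0$, and for every $n>0$ every finitely $M$-generated submodule of $M^{(n)}$ is a direct summand of $M^{(n)}$.
   Context: Modules are unitary right $R$-modules. $M$ is endoregular if $\mathrm{End}_R(M)$ is von Neumann regular. $M$ is Rickart if $\ker\varphi$ is a direct summand of $M$ for all $\varphi\in\mathrm{End}_R(M)$; $M$ is finite $\Sigma$-Rickart if $M^{(n)}$ is Rickart for all $n>0$. A module $N$ is finitely $M$-generated if there is an epimorphism $M^{(n)}\to N$ for some $n>0$. $\mathfrak{F}_M$ is the class of right $R$-modules $A$ such that for every monomorphism $\alpha:N\to M$ with $N$ finitely $M$-generated and every homomorphism $\beta:N\to A$ there is $\gamma:M\to A$ with $\beta=\gamma\alpha$. A module $X$ satisfies the $D_2$ condition if for every submodule $Y\le X$ such that $X/Y$ is isomorphic to a direct summand of $X$, $Y$ is a direct summand of $X$. *)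

From HB Require Import structures.
From mathcomp Require Import all_boot all_order all_algebra.
Set Implicit Arguments. Unset Strict Implicit. Unset Printing Implicit Defensive.
Import GRing.Theory.
Local Open Scope ring_scope.

(* Generic module theory for LEFT modules over an arbitrary ring S.
   Right R-modules are left modules over the converse ring R^c
   (see the statement). *)
Section ModuleDefs.
Variable S : pzRingType.

Definition hom (U V : lmodType S) (f : U -> V) : Prop :=
  forall (a : S) (x y : U), f (a *: x + y) = a *: f x + f y.

Definition submod (V : lmodType S) (P : V -> Prop) : Prop :=
  P 0 /\ forall (a : S) (x y : V), P x -> P y -> P (a *: x + y).

Definition dsummand (V : lmodType S) (P : V -> Prop) : Prop :=
  submod P /\ exists Q : V -> Prop, submod Q /\
    (forall x, P x -> Q x -> x = 0) /\
    (forall x, exists y z, P y /\ Q z /\ x = y + z).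

Definition endoregular (M : lmodType S) : Prop :=
  forall f : M -> M, hom f -> exists g : M -> M, hom g /\ forall x, f (g (f x)) = f x.

Definition rickart (M : lmodType S) : Prop :=
  forall f : M -> M, hom f -> dsummand (fun x => f x = 0).

Definition dpow (M : lmodType S) (n : nat) : lmodType S := {ffun 'I_n -> M}.

Definition fin_sigma_rickart (M : lmodType S) : Prop :=
  forall n : nat, (0 < n)%N -> rickart (dpow M n).

Definition fin_gen (M N : lmodType S) : Prop :=
  exists n : nat, (0 < n)%N /\ exists f : dpow M n -> N, hom f /\ forall y, exists x, f x = y.

Definition inF (M A : lmodType S) : Prop :=
  forall (N : lmodType S) (al : N -> M) (be : N -> A),
    fin_gen M N -> hom al -> (forall x y, al x = al y -> x = y) -> hom be ->
    exists ga : M -> A, hom ga /\ forall x, be x = ga (al x).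

(* D2 condition. "X/Y is isomorphic to a direct summand of X" is expressed
   (first isomorphism theorem) as: there is an endomorphism g of X with
   kernel Y whose image is a direct summand of X. *)
Definition D2 (X : lmodType S) : Prop :=
  forall Y : X -> Prop, submod Y ->
    (exists g : X -> X, hom g /\ (forall x, g x = 0 <-> Y x) /\
        dsummand (fun x => exists y, x = g y)) ->
    dsummand Y.

Definition fin_gen_sub (M X : lmodType S) (P : X -> Prop) : Prop :=
  submod P /\ exists n : nat, (0 < n)%N /\
    exists f : dpow M n -> X, hom f /\ forall x, P x <-> exists y, x = f y.

End ModuleDefs.

(* A homomorphism f is von Neumann regular (f g f = f for some g) exactly
   when its kernel and its image are direct summands, and regularity of all
   homomorphisms U -> W and V -> W (resp. W -> U and W -> V) passes to
   U (+) V -> W (resp. W -> U (+) V).  Hence if End(M) is regular, so is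
   every Hom(M^(k), M^(n)): kernels and images of maps between finite direct
   powers of M split, which yields (b) and (c).  Conversely, (c) says that the
   kernel and the image of every endomorphism of M split.  For (b), write
   M = ker f (+) N with N finitely M-generated; f is injective on N, so
   M \in F_M extends the inclusion of N along f to some g, and then
   f g f = f. *)
From Pilot Require Import Defs.
From HB Require Import structures.
From mathcomp Require Import all_boot all_order all_algebra.
From Stdlib Require Import ClassicalDescription ClassicalEpsilon.
(* Imported again so that [hom] denotes [Defs.hom], not [vector.hom]. *)
From Pilot Require Import Defs.
Set Implicit Arguments. Unset Strict Implicit. Unset Printing Implicit Defensive.
Import GRing.Theory.
Local Open Scope ring_scope.

Section ModuleTheory.
Variable S : pzRingType.
Implicit Types U V W X : lmodType S.

Section HomTheory.
Variables (U V : lmodType S) (f : U -> V) (hf : hom f).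

Lemma homD x y : f (x + y) = f x + f y.
Proof. by have := hf 1 x y; rewrite !scale1r. Qed.

Lemma hom0 : f 0 = 0.
Proof. by apply: (addIr (f 0)); rewrite -homD !add0r. Qed.

Lemma homN x : f (- x) = - f x.
Proof. by apply/eqP; rewrite -addr_eq0 -homD addNr hom0. Qed.

Lemma homB x y : f (x - y) = f x - f y.
Proof. by rewrite homD homN. Qed.

End HomTheory.

Lemma hom_id U : hom (fun x : U => x).
Proof. by []. Qed.

Lemma hom_comp U V W (f : V -> W) (g : U -> V) :
  hom f -> hom g -> hom (fun x => f (g x)).
Proof. by move=> hf hg a x y; rewrite hg hf. Qed.

Lemma hom_add U V (f g : U -> V) : hom f -> hom g -> hom (fun x => f x + g x).
Proof. by move=> hf hg a x y; rewrite hf hg scalerDr addrACA. Qed.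

Lemma hom_opp U V (f : U -> V) : hom f -> hom (fun x => - f x).
Proof. by move=> hf a x y; rewrite hf opprD scalerN. Qed.

Lemma hom_sub U V (f g : U -> V) : hom f -> hom g -> hom (fun x => f x - g x).
Proof. by move=> hf hg; apply: hom_add hf (hom_opp hg). Qed.

Ltac hom_tac := repeat match goal with
  | |- hom (fun x => x) => apply: hom_id
  | |- hom (fun x => _ + _) => apply: hom_add
  | |- hom (fun x => _ - _) => apply: hom_sub
  | |- hom (fun x => - _) => apply: hom_opp
  | |- hom ?f => assumption
  | |- hom (fun x => ?f (@?g x)) => apply: (@hom_comp _ _ _ f g)
  end.

Section SubmodTheory.
Variables (X : lmodType S) (K : X -> Prop) (hK : submod K).

Lemma submodD x y : K x -> K y -> K (x + y).
Proof. by move=> Kx Ky; have := hK.2 1 x y Kx Ky; rewrite scale1r. Qed.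

Lemma submodZ a x : K x -> K (a *: x).
Proof. by move=> Kx; have := hK.2 a x 0 Kx hK.1; rewrite addr0. Qed.

Lemma submodB x y : K x -> K y -> K (x - y).
Proof. by move=> Kx Ky; rewrite addrC -scaleN1r; apply: hK.2. Qed.

End SubmodTheory.

Lemma submod_ker U V (f : U -> V) : hom f -> submod (fun x => f x = 0).
Proof.
move=> hf; split; first exact: hom0.
by move=> a x y fx fy; rewrite hf fx fy scaler0 addr0.
Qed.

Lemma submod_im U V (f : U -> V) : hom f -> submod (fun y => exists x, y = f x).
Proof.
move=> hf; split; first by exists 0; rewrite (hom0 hf).
by move=> a _ _ [x ->] [y ->]; exists (a *: x + y); rewrite hf.
Qed.

Lemma dsummand_ext V (P Q : V -> Prop) :
  (forall x, P x <-> Q x) -> dsummand P -> dsummand Q.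
Proof.
move=> PQ [[P0 PD] [C [hC [PC0 PC]]]]; split.
  by split=> [|a x y /PQ Px /PQ Py]; apply/PQ; [|apply: PD].
exists C; split=> //; split=> [x /PQ|x]; first exact: PC0.
by have [y [z [Py [Cz ->]]]] := PC x; exists y, z; split=> //; apply/PQ.
Qed.

Lemma linear_relation_hom U V (rel : U -> V -> Prop) :
  (forall x, exists z, rel x z) ->
  (forall x z z', rel x z -> rel x z' -> z = z') ->
  (forall a x y zx zy, rel x zx -> rel y zy -> rel (a *: x + y) (a *: zx + zy)) ->
  exists g : U -> V, hom g /\ forall x, rel x (g x).
Proof.
move=> rel_ex rel_uniq rel_lin.
pose g x := proj1_sig (constructive_indefinite_description _ (rel_ex x)).
have gP x : rel x (g x) by rewrite /g; case: constructive_indefinite_description.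
exists g; split=> // a x y.
by apply: (rel_uniq (a *: x + y)); [apply: gP | apply: rel_lin; apply: gP].
Qed.

Section SubmoduleType.
Variables (X : lmodType S) (K : X -> Prop) (hK : submod K).

(* The proof of [submod K] is a phantom argument: it lets the canonical
   module structure below be found from the type alone. *)
Definition submod_mem of submod K : {pred X} :=
  fun x => if excluded_middle_informative (K x) then true else false.
Local Notation memK := (submod_mem hK).

Lemma submod_memP x : reflect (K x) (memK x).
Proof. by rewrite /submod_mem; case: excluded_middle_informative; constructor. Qed.

Fact submod_mem_closed : subsemimod_closed memK.
Proof.
split; first split.
- exact/submod_memP/hK.1.
- by move=> x y /submod_memP Kx /submod_memP Ky; apply/submod_memP/(submodD hK).
- by move=> a x /submod_memP Kx; apply/submod_memP; apply: submodZ hK _ _ Kx.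
Qed.

HB.instance Definition _ := GRing.isSubmodClosed.Build S X memK submod_mem_closed.

Definition submod_type := {x : X | memK x}.
HB.instance Definition _ := [isSub of submod_type for @sval X memK].
HB.instance Definition _ := [Choice of submod_type by <:].
HB.instance Definition _ := [SubChoice_isSubZmodule of submod_type by <:].
HB.instance Definition _ := [SubZmodule_isSubLmodule of submod_type by <:].

Lemma hom_submod_val : hom (val : submod_type -> X).
Proof. by []. Qed.

Lemma submod_valP (n : submod_type) : K (val n).
Proof. exact/submod_memP/valP. Qed.

Lemma submod_valS x : K x -> exists n : submod_type, x = val n.
Proof. by move=> /submod_memP Kx; exists (Sub x Kx); rewrite SubK. Qed.

End SubmoduleType.

Lemma dsummand_complement V (P : V -> Prop) : dsummand P ->
  exists (N : lmodType S) (v : N -> V) (p : V -> N),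
    [/\ hom v, hom p, forall n, p (v n) = n, forall x, P x -> p x = 0
      & forall x, P (x - v (p x))].
Proof.
move=> [hP [Q [hQ [PQ0 PQ]]]].
pose rel x (n : submod_type hQ) := P (x - val n).
have rel_uniq x n n' : rel x n -> rel x n' -> n = n'.
  move=> Pn Pn'; apply/val_inj/eqP; rewrite -subr_eq0; apply/eqP.
  apply: PQ0; last by apply: (submodB hQ); apply: submod_valP.
  by have := submodB hP Pn' Pn; rewrite opprB addrC addrA subrK.
have [p [hp pP]] : exists p, hom p /\ forall x, rel x (p x).
  apply: linear_relation_hom rel_uniq _.
    move=> x; have [y [z [Py [Qz ->]]]] := PQ x.
    by have [n ->] := submod_valS hQ Qz; exists n; rewrite /rel addrK.
  move=> a x y zx zy Px Py; rewrite /rel (hom_submod_val a zx zy).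
  by rewrite opprD addrACA -scalerBr; apply: hP.2.
exists (submod_type hQ), val, p; split=> //.
- by move=> n; apply: rel_uniq (pP _) _; rewrite /rel subrr; apply: hP.1.
- by move=> x Px; apply: rel_uniq (pP _) _; rewrite /rel subr0.
Qed.

Definition regular_map U V (f : U -> V) : Prop :=
  exists g : V -> U, hom g /\ forall x, f (g (f x)) = f x.

Definition regular_homs U V : Prop := forall f : U -> V, hom f -> regular_map f.

Section RegularMap.
Variables (U V : lmodType S) (f : U -> V) (hf : hom f).

Lemma regular_map_ker_summand : regular_map f -> dsummand (fun x => f x = 0).
Proof.
move=> [g [hg fgf]]; split; first exact: submod_ker.
exists (fun x => exists y, x = g (f y)); split.
  by apply: (submod_im (f := fun y => g (f y))); hom_tac.
split=> [x fx0 [y gfy] | x].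
  by move: fx0; rewrite gfy fgf => ->; rewrite (hom0 hg).
exists (x - g (f x)), (g (f x)); split; last split.
- by rewrite (homB hf) fgf subrr.
- by exists x.
- by rewrite subrK.
Qed.

Lemma regular_map_im_summand : regular_map f -> dsummand (fun y => exists x, y = f x).
Proof.
move=> [g [hg fgf]]; split; first exact: submod_im.
exists (fun y => f (g y) = 0); split.
  by apply: (submod_ker (f := fun y => f (g y))); hom_tac.
split=> [_ [x ->]| y]; first by rewrite fgf.
exists (f (g y)), (y - f (g y)); split; last split.
- by exists (g y).
- by rewrite (homB hg) (homB hf) fgf subrr.
- by rewrite addrC subrK.
Qed.

(* [g y] is the unique preimage of the image-component of [y] lying in the
   complement of the kernel. *)
Lemma regular_map_of_summands :
  dsummand (fun x => f x = 0) -> dsummand (fun y => exists x, y = f x) ->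
  regular_map f.
Proof.
move=> [hker [K [hK [kerK0 kerK]]]] [him [L [hL [imL0 imL]]]].
pose rel y k := K k /\ L (y - f k).
have rel_uniq y k k' : rel y k -> rel y k' -> k = k'.
  move=> [Kk Lk] [Kk' Lk']; apply/eqP; rewrite -subr_eq0; apply/eqP.
  apply: kerK0 (submodB hK Kk Kk'); rewrite (homB hf); apply: imL0.
    by exists (k - k'); rewrite (homB hf).
  by have := submodB hL Lk' Lk; rewrite opprB addrC addrA subrK.
have [g [hg gP]] : exists g, hom g /\ forall y, rel y (g y).
  apply: linear_relation_hom rel_uniq _.
    move=> y; have [_ [b [[x ->] [Lb ->]]]] := imL y.
    have [x0 [k [fx0 [Kk ->]]]] := kerK x.
    by exists k; split=> //; rewrite (homD hf) fx0 add0r addrAC subrr add0r.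
  move=> a x y zx zy [Kx Lx] [Ky Ly]; split; first exact: hK.2.
  by rewrite hf opprD addrACA -scalerBr; apply: hL.2.
exists g; split=> // x; have [_ Lg] := gP (f x).
apply/eqP; rewrite eq_sym -subr_eq0; apply/eqP; apply: imL0 Lg.
by exists (x - g (f x)); rewrite (homB hf).
Qed.

End RegularMap.

Lemma regular_homs_retract U V (i : V -> U) (j : U -> V) :
  hom i -> hom j -> (forall v, j (i v) = v) -> regular_homs U U -> regular_homs V V.
Proof.
move=> hi hj ji regU f hf.
have [G [hG FGF]] := regU (fun x => i (f (j x))) ltac:(hom_tac).
exists (fun v => j (G (i v))); split; first by hom_tac.
by move=> v; have := congr1 j (FGF (i v)); rewrite !ji.
Qed.

Section DecomposedRegular.
Variables (U V X W : lmodType S).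
Variables (i1 : U -> X) (i2 : V -> X) (p1 : X -> U) (p2 : X -> V).
Hypotheses (hi1 : hom i1) (hi2 : hom i2) (hp1 : hom p1) (hp2 : hom p2).
Hypothesis decomp : forall x, i1 (p1 x) + i2 (p2 x) = x.

(* With [q] the idempotent onto the image of [f i1], regularity of [f i1]
   and of [(1 - q) f i2] is glued into a pseudo-inverse of [f]. *)
Lemma regular_homs_from_decomp :
  regular_homs U W -> regular_homs V W -> regular_homs X W.
Proof.
move=> regU regV f hf.
have [g1 [hg1 fg1f]] := regU (fun u => f (i1 u)) ltac:(hom_tac).
pose q w := f (i1 (g1 w)).
have hq : hom q by rewrite /q; hom_tac.
pose h v := f (i2 v) - q (f (i2 v)).
have hh : hom h by rewrite /h; hom_tac.
have [g2 [hg2 hg2h]] := regV h hh.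
pose r w := g2 (w - q w).
pose g w := i1 (g1 (w - f (i2 (r w)))) + i2 (r w).
exists g; split; first by rewrite /g /r; hom_tac.
have qf1 u : q (f (i1 u)) = f (i1 u) by rewrite /q fg1f.
have hE x : f x - q (f x) = h (p2 x).
  rewrite -{1 2}(decomp x) (homD hf) (homD hq) qf1.
  by rewrite opprD addrACA subrr add0r.
have fgE w : f (g w) = q w + h (r w).
  by rewrite (homD hf) -/(q _) (homB hq) addrAC -addrA.
by move=> x; rewrite fgE /r hE hg2h -hE addrC subrK.
Qed.

(* Dually, with [g1] a pseudo-inverse of [p1 f] and [r = 1 - g1 p1 f], the
   second component is corrected through a pseudo-inverse of [p2 f r]. *)
Lemma regular_homs_to_decomp :
  regular_homs W U -> regular_homs W V -> regular_homs W X.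
Proof.
move=> regU regV f hf.
have hf1 : hom (fun w => p1 (f w)) by hom_tac.
have hf2 : hom (fun w => p2 (f w)) by hom_tac.
have [g1 [hg1 g1P]] := regU _ hf1.
pose r w := w - g1 (p1 (f w)).
have hr : hom r by rewrite /r; hom_tac.
have [g2 [hg2 g2P]] := regV (fun w => p2 (f (r w))) ltac:(hom_tac).
pose c x := g1 (p1 x).
exists (fun x => c x + r (g2 (p2 x - p2 (f (c x))))); split.
  by rewrite /c; hom_tac.
have f1r w : p1 (f (r w)) = 0 by rewrite /r (homB hf1) g1P subrr.
move=> w; rewrite -[RHS]decomp -[LHS]decomp; congr (i1 _ + i2 _).
  by rewrite (homD hf1) f1r addr0 /c g1P.
have -> : p2 (f w) - p2 (f (c (f w))) = p2 (f (r w)) by rewrite -(homB hf2).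
by rewrite (homD hf2) g2P (homB hf2) addrC subrK.
Qed.

End DecomposedRegular.

Section DirectPowers.
Variable M : lmodType S.

Definition dpow_in1 n (x : dpow M n) : dpow M n.+1 :=
  [ffun i => if unlift ord_max i is Some j then x j else 0].
Definition dpow_in2 n (m : M) : dpow M n.+1 :=
  [ffun i => if i == ord_max then m else 0].
Definition dpow_pr1 n (y : dpow M n.+1) : dpow M n :=
  [ffun j => y (lift ord_max j)].
Definition dpow_pr2 n (y : dpow M n.+1) : M := y ord_max.

Lemma hom_dpow_in1 n : hom (@dpow_in1 n).
Proof.
move=> a x y; apply/ffunP=> i; rewrite !ffunE.
by case: (unlift _ i) => [j|]; rewrite ?ffunE ?scaler0 ?addr0.
Qed.

Lemma hom_dpow_in2 n : hom (@dpow_in2 n).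
Proof.
move=> a x y; apply/ffunP=> i; rewrite !ffunE.
by case: (i == ord_max); rewrite ?scaler0 ?addr0.
Qed.

Lemma hom_dpow_pr1 n : hom (@dpow_pr1 n).
Proof. by move=> a x y; apply/ffunP=> i; rewrite !ffunE. Qed.

Lemma hom_dpow_pr2 n : hom (@dpow_pr2 n).
Proof. by move=> a x y; rewrite /dpow_pr2 !ffunE. Qed.

Lemma dpow_decomp n (y : dpow M n.+1) : dpow_in1 (dpow_pr1 y) + dpow_in2 n (dpow_pr2 y) = y.
Proof.
apply/ffunP=> i; rewrite !ffunE.
case: unliftP => [j ->|->]; last by rewrite eqxx add0r.
by rewrite ffunE eq_sym (negbTE (neq_lift _ _)) addr0.
Qed.

Lemma dpow0_eq (x y : dpow M 0) : x = y.
Proof. by apply/ffunP=> -[]. Qed.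

Lemma regular_homs_from_dpow W : regular_homs M W -> forall n, regular_homs (dpow M n) W.
Proof.
move=> regM; elim=> [|n IHn].
  move=> f hf; exists (fun=> 0); split=> [a x y|x]; first by rewrite scaler0 addr0.
  by congr f; apply: dpow0_eq.
exact: regular_homs_from_decomp (@hom_dpow_in1 n) (hom_dpow_in2 n) (@dpow_decomp n) IHn regM.
Qed.

Lemma regular_homs_to_dpow W : regular_homs W M -> forall n, regular_homs W (dpow M n).
Proof.
move=> regM; elim=> [|n IHn].
  move=> f hf; exists (fun=> 0); split=> [a x y|x]; first by rewrite scaler0 addr0.
  exact: dpow0_eq.
exact: regular_homs_to_decomp (@hom_dpow_pr1 n) (@hom_dpow_pr2 n) (@dpow_decomp n) IHn regM.
Qed.

Lemma regular_homs_dpow : endoregular M -> forall k n, regular_homs (dpow M k) (dpow M n).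
Proof. by move=> regM k n; apply/regular_homs_from_dpow/regular_homs_to_dpow. Qed.

Definition dpow1_in (m : M) : dpow M 1 := [ffun=> m].
Definition dpow1_pr (x : dpow M 1) : M := x ord0.

Lemma hom_dpow1_in : hom dpow1_in.
Proof. by move=> a x y; apply/ffunP=> i; rewrite !ffunE. Qed.

Lemma hom_dpow1_pr : hom dpow1_pr.
Proof. by move=> a x y; rewrite /dpow1_pr !ffunE. Qed.

Lemma dpow1_inK : cancel dpow1_in dpow1_pr.
Proof. by move=> m; rewrite /dpow1_pr ffunE. Qed.

Lemma dpow1_prK : cancel dpow1_pr dpow1_in.
Proof. by move=> x; apply/ffunP=> i; rewrite ffunE /dpow1_pr (ord1 i). Qed.

Lemma endoregular_dpow1 : endoregular (dpow M 1) -> endoregular M.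
Proof. exact: regular_homs_retract hom_dpow1_in hom_dpow1_pr dpow1_inK. Qed.

Lemma fin_sigma_rickart_of_endoregular : endoregular M -> fin_sigma_rickart M.
Proof.
move=> regM n _ f hf.
exact: regular_map_ker_summand hf (regular_homs_dpow regM hf).
Qed.

Lemma inF_of_endoregular (A : lmodType S) : endoregular M -> inF M A.
Proof.
move=> regM N al be [k [_ [p [hp p_surj]]]] hal al_inj hbe.
have [g [hg alg]] := @regular_homs_from_dpow M regM k (fun x => al (p x)) ltac:(hom_tac).
exists (fun m => be (p (g m))); split; first by hom_tac.
by move=> n; have [x <-] := p_surj n; congr be; apply: al_inj; rewrite alg.
Qed.

Lemma endoregular_of_rickart_inF : rickart (dpow M 1) -> inF M M -> endoregular M.
Proof.
move=> rickM FM; apply: endoregular_dpow1 => F hF.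
have hin := hom_dpow1_in; have hpr := hom_dpow1_pr.
have [N [v [p [hv hp pvK p_ker vp_ker]]]] := dsummand_complement (rickM F hF).
have FvpE x : F (v (p x)) = F x.
  by apply/eqP; rewrite eq_sym -subr_eq0 -(homB hF) (vp_ker x).
have fgN : fin_gen M N by exists 1%N; split=> //; exists p; split=> // n; exists (v n).
have al_inj a b : dpow1_pr (F (v a)) = dpow1_pr (F (v b)) -> a = b.
  move=> /(can_inj dpow1_prK) Fab; rewrite -(pvK a) -(pvK b).
  apply/eqP; rewrite -subr_eq0 -(homB hp); apply/eqP/p_ker.
  by rewrite (homB hF) Fab subrr.
have [ga [hga gaP]] := FM N (fun n => dpow1_pr (F (v n))) (fun n => dpow1_pr (v n))
  fgN ltac:(hom_tac) al_inj ltac:(hom_tac).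
exists (fun y => dpow1_in (ga (dpow1_pr y))); split; first by hom_tac.
by move=> x; rewrite -[F x]FvpE -gaP dpow1_prK.
Qed.

Lemma D2_dpow_of_endoregular n : endoregular M -> D2 (dpow M n).
Proof.
move=> regM Y hY [g [hg [gY _]]].
exact: dsummand_ext gY (regular_map_ker_summand hg (regular_homs_dpow regM hg)).
Qed.

Lemma fin_gen_sub_summand_of_endoregular n (P : dpow M n -> Prop) :
  endoregular M -> fin_gen_sub M P -> dsummand P.
Proof.
move=> regM [_ [k [_ [f [hf Pf]]]]].
apply: dsummand_ext (regular_map_im_summand hf (regular_homs_dpow regM hf)).
by move=> x; split=> /Pf.
Qed.

Lemma endoregular_of_D2_summands :
  D2 (dpow M 1) ->
  (forall P : dpow M 1 -> Prop, fin_gen_sub M P -> dsummand P) -> endoregular M.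
Proof.
move=> D2M fgM; apply: endoregular_dpow1 => F hF.
have im_summand : dsummand (fun y => exists x, y = F x).
  by apply: fgM; split; [exact: submod_im | exists 1%N; split=> //; exists F].
have ker_summand : dsummand (fun x => F x = 0).
  by apply: (D2M _ (submod_ker hF)); exists F; split=> //; split.
exact: regular_map_of_summands.
Qed.

End DirectPowers.

End ModuleTheory.

Theorem mainTheorem8 (R : nzRingType) (M : lmodType R^c) :
  (endoregular M <-> (fin_sigma_rickart M /\ inF M M)) /\
  (endoregular M <->
     ((forall n : nat, (0 < n)%N -> D2 (dpow M n)) /\
      (forall n : nat, (0 < n)%N -> forall P : dpow M n -> Prop,
          fin_gen_sub M P -> dsummand P))).
Proof.
split; split.
- move=> regM; split; first exact: fin_sigma_rickart_of_endoregular.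
  exact: inF_of_endoregular.
- by move=> [rickM FM]; apply: endoregular_of_rickart_inF (rickM 1%N isT) FM.
- move=> regM; split=> n _; first exact: D2_dpow_of_endoregular.
  by move=> P; apply: fin_gen_sub_summand_of_endoregular.
- by move=> [D2M sumM]; apply: endoregular_of_D2_summands (D2M 1%N isT) (sumM 1%N isT).
Qed.
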